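(* Let $m\ge2$, $G=CK(2m-1)$, and let $B$ be a blocker for the simple Hamiltonian paths of $G$ whose $m$ edges are parallel (or equal) to the boundary edges $[0,1],\dots,[m-1,m]$, one per direction. Let $[\alpha,\alpha+1]$ and $[m-\delta-1,m-\delta]$ be the first and last edges of $\langle0,1,\dots,m\rangle$ belonging to $B$. Let $[i,j],[k,l]\in B$ with $\alpha<i<k<m-\delta$ and $j,l\notin\{\alpha,\alpha+1,\dots,m-\delta\}$. Then: (1) the edges $[i,j]$ and $[k,l]$ do not cross, i.e., the points $i,k,l,j$ appear in this order on the boundary of the convex hull of $V(G)$; (2) $k-i$ is smaller than the distance between $l$ and $j$.
   Context: $CK(2m-1)$ is the complete convex geometric graph on $2m-1$ points in convex position, labelled clockwise $0,\dots,2m-2$ (elements of $\mathbb{Z}_{2m-1}$), with all segments as edges; boundary edges are $[i,i+1]$. The direction of $[i,j]$ is $i+j\pmod{2m-1}$; edges are parallel if they have the same direction. The distance between vertices $x,y$ is $\min(|x-y|,(2m-1)-|x-y|)$. A simple Hamiltonian path (SHP) is a path through all vertices whose edges pairwise do not cross; a blocker for SHPs is an edge set of smallest possible size sharing an edge with every SHP. *)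

From mathcomp Require Import all_boot.
Set Implicit Arguments. Unset Strict Implicit. Unset Printing Implicit Defensive.

(* Vertices of CK(n): 'I_n, labelled clockwise 0..n-1.
   An edge [a,b] (a <> b) is the 2-element set [set a; b]. *)

Definition is_edge (n : nat) (e : {set 'I_n}) : bool := #|e| == 2.

(* Two edges cross iff their (four distinct) endpoints interleave along the
   boundary; since labels increase clockwise this is interleaving in 0..n-1. *)
Definition crossing (n : nat) (e f : {set 'I_n}) : Prop :=
  exists a b c d : 'I_n, e = [set a; b] /\ f = [set c; d] /\
    ((a < c < b) && (b < d) \/ (c < a < d) && (d < b))%N.

Definition path_edges (n : nat) (p : seq 'I_n) : seq {set 'I_n} :=
  [seq [set x.1; x.2] | x <- zip p (behead p)].

Definition is_SHP (n : nat) (p : seq 'I_n) : Prop :=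
  perm_eq p (enum 'I_n) /\
  (forall e f, e \in path_edges p -> f \in path_edges p -> ~ crossing e f).

Definition meets_all_SHP (n : nat) (B : {set {set 'I_n}}) : Prop :=
  forall p : seq 'I_n, is_SHP p -> exists2 e, e \in B & e \in path_edges p.

Definition is_blocker (n : nat) (B : {set {set 'I_n}}) : Prop :=
  (forall e, e \in B -> is_edge e) /\ meets_all_SHP B /\
  (forall B' : {set {set 'I_n}}, (forall e, e \in B' -> is_edge e) ->
     meets_all_SHP B' -> #|B| <= #|B'|)%N.

Definition direction (n : nat) (e : {set 'I_n}) : nat :=
  (\sum_(x in e) nat_of_ord x) %% n.

Definition has_edge (n : nat) (B : {set {set 'I_n}}) (x y : nat) : bool :=
  [exists a : 'I_n, exists b : 'I_n,
     [&& nat_of_ord a == x, nat_of_ord b == y & [set a; b] \in B]].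

Definition vdist (n x y : nat) : nat :=
  minn ((x - y) + (y - x)) (n - ((x - y) + (y - x))).

Definition cw_offset (n i x : nat) : nat := (x + n - i) %% n.

From mathcomp Require Import all_boot zify.
Set Implicit Arguments. Unset Strict Implicit. Unset Printing Implicit Defensive.

(* Since [B] has [m] edges, one per direction [1, 3, ..., 2m-1], it has
   exactly one edge of each of these directions and none of even direction.
   A path that grows an arc of consecutive vertices one vertex at a time is a
   simple Hamiltonian path; while the arc grows alternately on both sides, its
   edges are the chords joining the two ends of the arc, whose directions
   alternate between two consecutive values, one of them even.  Unwrap [j], [l]
   to [j'], [l'] on the arc from [m - delta] to [alpha + 2m - 1].  If
   [i + j' <= k + l'], concatenate a zigzag around [[i,j]] stopped just inside
   it (around [[alpha, alpha+1]] instead when the next part would pass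
   [alpha]), a run of boundary edges outside <alpha, ..., m - delta>, and a
   zigzag around [[k,l]] stopped just inside it: this simple Hamiltonian path
   avoids [B].  Hence [k + l' < i + j'], which yields both claims. *)

Lemma modn_window_inj n L x y : L <= x < L + n -> L <= y < L + n ->
  x %% n = y %% n -> x = y.
Proof.
wlog le_xy : x y / x <= y => [hw hx hy e|/andP[Lx _] /andP[_ yL] /eqP].
  by case: (leqP x y) => [|/ltnW] h; [exact: hw | symmetry; apply: hw].
rewrite eq_sym eqn_mod_dvd // => /dvdn_leq; lia.
Qed.

Lemma modn_ltn2 n x : x < 2 * n -> x %% n = if x < n then x else x - n.
Proof.
move=> x2n; case: ifP => xn; first by rewrite modn_small.
by rewrite -[in LHS](@subnK n x) ?modnDr ?modn_small //; lia.
Qed.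

Lemma cw_offset_mod n x y : x <= y < x + n -> cw_offset n (x %% n) (y %% n) = y - x.
Proof.
move=> xy; have n_gt0 : 0 < n by lia.
have [d dn ->] : exists2 d, d < n & y = x + d by exists (y - x); lia.
rewrite addKn -modnDml /cw_offset.
have rn := ltn_pmod x n_gt0; set r := x %% n in rn *.
rewrite (@modn_ltn2 n (r + d)); last lia; case: ifP => small.
  by rewrite (_ : _ + n - r = d + n) ?modnDr ?modn_small //; lia.
by rewrite (_ : _ + n - r = d) ?modn_small //; lia.
Qed.

Lemma vdist_mod n x y : x <= y < x + n ->
  vdist n (x %% n) (y %% n) = minn (y - x) (n - (y - x)).
Proof.
move=> xy; have n_gt0 : 0 < n by lia.
have [d dn ->] : exists2 d, d < n & y = x + d by exists (y - x); lia.
rewrite addKn -modnDml /vdist.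
have rn := ltn_pmod x n_gt0; set r := x %% n in rn *.
by rewrite (@modn_ltn2 n (r + d)); last lia; case: ifP; lia.
Qed.

Lemma set2_eq (T : finType) (a b x y : T) : a != b -> [set a; b] = [set x; y] ->
  (a = x /\ b = y) \/ (a = y /\ b = x).
Proof.
move=> ab e; have := set21 a b; have := set22 a b; rewrite e.
by case/set2P=> bE /set2P[] aE; subst; rewrite ?eqxx in ab; [| right | left |].
Qed.

Section Cycle.

Variables (n : nat) (n_gt0 : 0 < n).

Definition vertex (x : nat) : 'I_n := Ordinal (ltn_pmod x n_gt0).

Definition seg (x y : nat) : {set 'I_n} := [set vertex x; vertex y].

Lemma vertexD x : vertex (x + n) = vertex x.
Proof. by apply: val_inj; rewrite /= modnDr. Qed.

Lemma vertex_ord (x : 'I_n) : vertex x = x.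
Proof. by apply: val_inj; rewrite /= modn_small. Qed.

Lemma segD x y : seg (x + n) (y + n) = seg x y.
Proof. by rewrite /seg !vertexD. Qed.

Lemma segDr x y : seg x (y + n) = seg x y.
Proof. by rewrite /seg vertexD. Qed.

Lemma segC x y : seg x y = seg y x.
Proof. by rewrite /seg setUC. Qed.

Lemma vertex_window_inj L x y : L <= x < L + n -> L <= y < L + n ->
  vertex x = vertex y -> x = y.
Proof. by move=> hx hy /(congr1 val); apply: modn_window_inj hx hy. Qed.

Lemma vertex_window_neq L x y : L <= x < L + n -> L <= y < L + n ->
  x != y -> vertex x != vertex y.
Proof. by move=> hx hy; apply: contra_neq; apply: vertex_window_inj hx hy. Qed.

Lemma has_edge_seg (B : {set {set 'I_n}}) x y : x < n -> y < n ->
  has_edge B x y = (seg x y \in B).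
Proof.
move=> xn yn; apply/existsP/idP => [[a /existsP[c /and3P[/eqP <- /eqP <- acB]]]|xyB].
  by rewrite /seg !vertex_ord.
by exists (vertex x); apply/existsP; exists (vertex y); rewrite /= !modn_small ?eqxx.
Qed.

Lemma direction_seg x y : x < y < x + n -> direction (seg x y) = (x + y) %% n.
Proof.
move=> xy; rewrite /direction big_setU1 ?big_set1 /= ?modnDm // in_set1.
by apply/eqP => /(vertex_window_inj (L := x)) ?; lia.
Qed.

Lemma crossing_sym (e f : {set 'I_n}) : crossing e f -> crossing f e.
Proof. by case=> a [b [c [d [-> [-> H]]]]]; exists c, d, a, b; do 2!split=> //; tauto. Qed.

Lemma crossing_irrefl (e : {set 'I_n}) : ~ crossing e e.
Proof.
case=> a [b [c [d [-> [ecd H]]]]].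
have : c \in [set a; b] by rewrite ecd set21.
have : a \in [set c; d] by rewrite -ecd set21.
by do 2!case/set2P=> /(congr1 val) /= ?; case: H; lia.
Qed.

Lemma cw_offset_ord (x z : 'I_n) :
  cw_offset n x z = if x <= z then z - x else z + n - x.
Proof.
rewrite /cw_offset; case: ifP => xz; last by rewrite modn_small; lia.
by rewrite -addnBAC // modnDr modn_small //; have := ltn_ord z; lia.
Qed.

(* Interleaving is invariant under rotation, so it can be read off clockwise
   from any endpoint. *)
Lemma crossing_rotate (x y : 'I_n) f : crossing [set x; y] f ->
  exists z w : 'I_n, f = [set z; w] /\
    [/\ 0 < cw_offset n x z, cw_offset n x z < cw_offset n x y
      & cw_offset n x y < cw_offset n x w].
Proof.
case=> a [b [c [d [eab [-> H]]]]].
have := ltn_ord a; have := ltn_ord b; have := ltn_ord c; have := ltn_ord d.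
move=> dn cn bn an; have ab : a != b by apply/eqP => ab; subst; case: H; lia.
have [[? ?]|[? ?]] := set2_eq ab (esym eab); subst; case: H => /andP[/andP[h1 h2] h3];
  [exists c, d | exists d, c | exists d, c | exists c, d]; rewrite !cw_offset_ord;
  (split; [by rewrite // setUC | split; repeat case: ifP; lia]).
Qed.

Lemma seg_no_cross x y p q : x <= p <= y -> x <= q <= y -> y < x + n ->
  ~ crossing (seg x y) (seg p q).
Proof.
move=> xp xq yx /crossing_rotate [z [w [pqzw [_ _]]]].
have /set2P : w \in seg p q by rewrite pqzw set22.
by case=> ->; rewrite !cw_offset_mod; lia.
Qed.

End Cycle.

Lemma mem_path_edges n (f : nat -> 'I_n) len e :
  e \in path_edges (mkseq f len) -> exists2 t, t.+1 < len & e = [set f t; f t.+1].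
Proof.
rewrite /path_edges => /mapP[[x1 x2]] /(nthP (f 0, f 0))[t].
rewrite size_zip size_behead !size_mkseq => tlen.
rewrite nth_zip_cond size_zip size_behead !size_mkseq tlen /= nth_behead !nth_mkseq; try lia.
by case=> <- <- ->; exists t; first lia.
Qed.

Section ArcPath.

(* The arc visited after step [t] is [lo t, lo t + t]; each step adds the
   vertex just right of it (when [lo] stays) or just left of it. *)
Variable lo : nat -> nat.
Hypothesis lo_step : forall t, lo t.+1 = lo t \/ (lo t.+1).+1 = lo t.

Definition arc_vertex (t : nat) : nat :=
  if t is s.+1 then (if lo t == lo s then lo t + t else lo t) else lo 0.

Lemma arc_mono s t : s <= t -> lo t <= lo s /\ lo s + s <= lo t + t.
Proof.
elim: t => [|t IH] st; first by have -> : s = 0 by lia.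
case: (ltnP t s) => ts; first by have -> : s = t.+1 by lia.
by have := IH ts; have := lo_step t; lia.
Qed.

Lemma arc_vertex_end t : arc_vertex t = lo t \/ arc_vertex t = lo t + t.
Proof. by case: t => [|t] /=; [left | case: ifP; [right | left]]. Qed.

Lemma arc_vertex_in_arc s t : s <= t -> lo t <= arc_vertex s <= lo t + t.
Proof. by move=> /arc_mono; have := arc_vertex_end s; lia. Qed.

Lemma arc_vertex_inj s t : s < t -> arc_vertex s <> arc_vertex t.
Proof.
case: t => // t st; have := arc_vertex_in_arc (_ : s <= t).
by have := lo_step t; rewrite /arc_vertex; case: eqP; case: s st => *; lia.
Qed.

Variables (n : nat) (n_gt0 : 0 < n).
Local Notation seg := (seg n_gt0).

Definition arc_path : seq 'I_n := mkseq (fun t => vertex n_gt0 (arc_vertex t)) n.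

Lemma arc_path_uniq : uniq arc_path.
Proof.
rewrite map_inj_in_uniq ?iota_uniq // => s t; rewrite !mem_iota /= => sn tn.
have := @arc_vertex_in_arc s n.-1 ltac:(lia); have := @arc_vertex_in_arc t n.-1 ltac:(lia).
move=> ht hs /(vertex_window_inj (L := lo n.-1)) vst.
have st : arc_vertex s = arc_vertex t by apply: vst; lia.
by case: (ltngtP s t) => // [/arc_vertex_inj/(_ st) | /arc_vertex_inj/(_ (esym st))].
Qed.

Lemma arc_edge_no_cross t p q : t.+1 < n ->
  lo t <= p <= lo t + t -> lo t <= q <= lo t + t ->
  ~ crossing (seg (arc_vertex t) (arc_vertex t.+1)) (seg p q).
Proof.
move=> tn pt qt.
have -> : arc_vertex t.+1 = if lo t.+1 == lo t then lo t + t.+1 else lo t.+1.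
  by rewrite /=; case: eqP => // ->.
case: (lo_step t) => lo_t.
  rewrite lo_t eqxx; case: (arc_vertex_end t) => ->.
    by apply: seg_no_cross; lia.
  by rewrite -(segD n_gt0 p q) segC -segDr; apply: seg_no_cross; lia.
rewrite ifN_eq; last lia.
case: (arc_vertex_end t) => ->.
  by rewrite -(segDr n_gt0 (lo t)); apply: seg_no_cross; lia.
by rewrite segC; apply: seg_no_cross; lia.
Qed.

Lemma arc_path_SHP : is_SHP arc_path.
Proof.
split.
  apply: uniq_perm arc_path_uniq (enum_uniq _) _.
  apply: (uniq_min_size arc_path_uniq _ _).2 => [x _|]; first exact: mem_enum.
  by rewrite size_enum_ord size_mkseq.
move=> e f /mem_path_edges[t tn ->] /mem_path_edges[s sn ->].
wlog st : s t sn tn / s <= t => [hw|].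
  by case: (leqP s t) => [|/ltnW] h; [exact: hw | move/crossing_sym; exact: hw].
case: (ltngtP s t) st => // [st _|-> _]; last exact: crossing_irrefl.
by apply: arc_edge_no_cross => //; apply: arc_vertex_in_arc; lia.
Qed.

Lemma arc_edge_switch t : (t = 0 \/ lo t.-1 = (lo t.+1).+1) ->
  seg (arc_vertex t) (arc_vertex t.+1) = seg (lo t.+1) (lo t.+1 + t.+1).
Proof.
have := lo_step t; case: t => [|t] step0 /=.
  by case: eqP => [-> | ne] _; last rewrite segC; congr (seg _ _); lia.
have := lo_step t => step1 [//|/= lo_t].
by case: eqP => e1; case: eqP => e2; rewrite ?[seg _ (lo t.+2)]segC; congr (seg _ _); lia.
Qed.

Lemma arc_edge_run t : 0 < t -> lo t.-1 = lo t -> lo t.+1 = lo t ->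
  seg (arc_vertex t) (arc_vertex t.+1) = seg (lo t + t) (lo t + t).+1.
Proof. by case: t => // t _ /= e1 e2; rewrite e1 e2 !eqxx [_ + t.+2]addnS. Qed.

End ArcPath.

(* The arc first grows alternately on both sides, its chords having endpoint
   sums [u1] and [u1 + 1], until its left end is [lo1]; it then grows to the
   right until the alternating growth around the sums [u2], [u2 + 1] takes over. *)
Definition zigzag_lo (u1 lo1 u2 t : nat) : nat :=
  minn (maxn ((u1.+1 - t) %/ 2) lo1) ((u2.+1 - t) %/ 2).

Lemma zigzag_lo_step u1 lo1 u2 t :
  zigzag_lo u1 lo1 u2 t.+1 = zigzag_lo u1 lo1 u2 t \/
  (zigzag_lo u1 lo1 u2 t.+1).+1 = zigzag_lo u1 lo1 u2 t.
Proof. rewrite /zigzag_lo; lia. Qed.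

Section ZigzagPhases.

Variables (u1 lo1 u2 : nat).
Hypothesis bounds : 2 * lo1 <= u1 <= u2.

Lemma zigzag_lo_zig1 s : s <= (u1 - 2 * lo1).+1 -> zigzag_lo u1 lo1 u2 s = (u1.+1 - s) %/ 2.
Proof. rewrite /zigzag_lo; lia. Qed.

Lemma zigzag_lo_run s : u1 - 2 * lo1 <= s <= (u2 - 2 * lo1).+1 -> zigzag_lo u1 lo1 u2 s = lo1.
Proof. rewrite /zigzag_lo; lia. Qed.

Lemma zigzag_lo_zig2 s : u2 - 2 * lo1 <= s -> zigzag_lo u1 lo1 u2 s = (u2.+1 - s) %/ 2.
Proof. rewrite /zigzag_lo; lia. Qed.

End ZigzagPhases.

Section ThreePhasePath.

Variables (n : nat) (n_gt0 : 0 < n) (B : {set {set 'I_n}}).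
Hypothesis B_meets : meets_all_SHP B.
Local Notation seg := (seg n_gt0).

Lemma three_phase_path_meets u1 lo1 u2 : 2 * lo1 <= u1 <= u2 -> n <= u2.+1 ->
  (forall X Y, lo1 <= X -> X < Y < X + n -> u1 <= X + Y <= u1.+1 -> seg X Y \notin B) ->
  (forall X, u1 - lo1 < X <= u2 - lo1 -> seg X X.+1 \notin B) ->
  (forall X Y, X < lo1 -> X < Y < X + n -> u2 <= X + Y <= u2.+1 -> seg X Y \notin B) ->
  False.
Proof.
move=> bounds n_u2 zig1 run zig2.
have lo_step := zigzag_lo_step u1 lo1 u2.
have [e eB /mem_path_edges[t tn eE]] := B_meets (arc_path_SHP lo_step n_gt0).
have : seg (arc_vertex (zigzag_lo u1 lo1 u2) t) (arc_vertex (zigzag_lo u1 lo1 u2) t.+1) \in B.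
  by rewrite eE in eB.
case: (leqP t (u1 - 2 * lo1)) => [ph1|ph1].
  rewrite (arc_edge_switch lo_step n_gt0) !zigzag_lo_zig1 //; try lia.
  by apply/negP/zig1; lia.
case: (leqP t (u2 - 2 * lo1)) => [ph2|ph3].
  rewrite (arc_edge_run n_gt0) ?zigzag_lo_run //; try lia.
  by apply/negP/run; lia.
rewrite (arc_edge_switch lo_step n_gt0) !zigzag_lo_zig2 //; try lia.
by apply/negP/zig2; lia.
Qed.

End ThreePhasePath.

(* The directions [1, 3, ..., 2m - 1] of [[0,1], ..., [m-1,m]] in a cycle of
   length [n = 2m - 1]; the last one is [0] modulo [n]. *)
Definition odd_dir (n d : nat) : bool := (d %% n == 0) || odd (d %% n).

Lemma odd_dir_mod n d : odd_dir n (d %% n) = odd_dir n d.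
Proof. by rewrite /odd_dir modn_mod. Qed.

Lemma odd_dir_boundary m n x : n.+1 = 2 * m -> odd_dir n (2 * x + 1) = (x %% n < m).
Proof.
move=> n_def; have n_gt0 : 0 < n by lia.
rewrite -odd_dir_mod -modnDml -modnMmr modnDml odd_dir_mod /odd_dir.
have := ltn_pmod x n_gt0; set r := x %% n => rn.
by rewrite modn_ltn2; [case: ifP|]; lia.
Qed.

Lemma odd_dir_pair n u : odd n -> u %% n != 0 -> odd_dir n u -> ~~ odd_dir n u.+1.
Proof.
move=> n_odd u0; have n_gt0 : 0 < n by case: n n_odd {u0}.
rewrite /odd_dir (negbTE u0) /= -addn1 -modnDml.
have := ltn_pmod u n_gt0; move: u0; set r := u %% n => r0 rn.
by rewrite modn_ltn2; [case: ifP|]; lia.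
Qed.

(* The lower of the two consecutive chord sums of a zigzag through the sum [d]:
   the pair must avoid the residues [0, 1], which are both odd directions. *)
Definition zigzag_sum (n d : nat) : nat := if d %% n == 1 then d else d.-1.

Lemma zigzag_sum_bounds n d : zigzag_sum n d <= d <= (zigzag_sum n d).+1.
Proof. by rewrite /zigzag_sum; case: ifP; lia. Qed.

Lemma zigzag_sum_mono n d d' : d <= d' -> zigzag_sum n d <= zigzag_sum n d'.
Proof.
rewrite leq_eqVlt => /orP[/eqP -> //|dd'].
by have := zigzag_sum_bounds n d; have := zigzag_sum_bounds n d'; lia.
Qed.

Lemma zigzag_sum_mod n d : 1 < n -> 0 < d -> zigzag_sum n d %% n != 0.
Proof.
move=> n_gt1 d_gt0; rewrite /zigzag_sum; case: ifP => [/eqP -> //|/eqP d1].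
apply/eqP => d0; apply: d1.
by rewrite -(prednK d_gt0) -addn1 -modnDml d0 modn_small.
Qed.

Lemma blocker_dirs m N (B : {set {set 'I_N}}) : N.+1 = 2 * m -> #|B| = m ->
  (forall t, t < m -> exists e, [/\ e \in B, direction e = (2 * t + 1) %% N &
     forall f, f \in B -> direction f = (2 * t + 1) %% N -> f = e]) ->
  forall e, e \in B -> exists2 t, t < m & direction e = (2 * t + 1) %% N.
Proof.
move=> N_def cardB dirs.
have [f f_spec] := fin_all_exists (fun t : 'I_m => dirs t (ltn_ord t)).
have f_inj : injective f.
  move=> s t /(congr1 (@direction N)); case: (f_spec s) => _ -> _; case: (f_spec t) => _ -> _.
  have := ltn_ord s; have := ltn_ord t => tm sm.
  move=> /(@modn_window_inj N 1 (2 * s + 1) (2 * t + 1) ltac:(lia) ltac:(lia)) st.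
  by apply: ord_inj; lia.
have fB : [set f t | t : 'I_m] = B.
  apply/eqP; rewrite eqEcard card_imset // card_ord cardB leqnn andbT.
  by apply/subsetP => _ /imsetP[t _ ->]; case: (f_spec t).
by move=> e; rewrite -fB => /imsetP[t _ ->]; exists t => //; case: (f_spec t).
Qed.

Section InnerChords.

Variables (m N : nat) (N_gt0 : 0 < N) (B : {set {set 'I_N}}) (alpha b : nat).
Local Notation seg := (seg N_gt0).
Local Notation vertex := (vertex N_gt0).

Hypotheses (N_def : N.+1 = 2 * m) (m_ge2 : 2 <= m) (B_meets : meets_all_SHP B).
Hypothesis B_odd : forall e, e \in B -> odd_dir N (direction e).
Hypothesis B_uniq : forall e f, e \in B -> f \in B -> direction e = direction f -> e = f.
Hypotheses (alpha_lt_b : alpha < b) (b_le_m : b <= m).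
Hypothesis alpha_edge : has_edge B alpha alpha.+1.
Hypothesis no_edge_before : forall t, t < alpha -> ~~ has_edge B t t.+1.
Hypothesis no_edge_after : forall t, b <= t < m -> ~~ has_edge B t t.+1.

Lemma zigzag_seg_notin a c X Y : seg a c \in B -> a < c < a + N ->
  X < Y < X + N -> zigzag_sum N (a + c) <= X + Y <= (zigzag_sum N (a + c)).+1 ->
  vertex a != vertex X -> vertex a != vertex Y -> seg X Y \notin B.
Proof.
move=> acB ac XY XYu aX aY; apply/negP => XYB.
have := zigzag_sum_bounds N (a + c); set u := zigzag_sum N (a + c) in XYu * => acu.
case: (eqVneq (X + Y) (a + c)) => [sum_eq|sum_ne].
  have : vertex a \in seg X Y by rewrite (B_uniq XYB acB) ?set21 // !direction_seg // sum_eq.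
  by case/set2P => /eqP; rewrite ?(negbTE aX) ?(negbTE aY).
have u0 : u %% N != 0 by apply: zigzag_sum_mod; lia.
have N_odd : odd N by lia.
have := B_odd acB; have := B_odd XYB; rewrite !direction_seg // !odd_dir_mod.
have [[-> ->]|[-> ->]] : X + Y = u /\ a + c = u.+1 \/ a + c = u /\ X + Y = u.+1 by lia.
  by move=> /(odd_dir_pair N_odd u0)/negbTE ->.
by move=> dXY /(odd_dir_pair N_odd u0); rewrite dXY.
Qed.

Lemma boundary_seg_notin Y : b <= Y < N + alpha -> seg Y Y.+1 \notin B.
Proof.
move=> Yb; apply/negP => YB.
have := B_odd YB; rewrite direction_seg; last lia.
rewrite odd_dir_mod addnS addnn -mul2n -addn1 (odd_dir_boundary _ N_def) => Ym.
have : seg (Y %% N) (Y %% N).+1 \in B.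
  by rewrite /seg; congr (_ \in B): YB; congr [set _; _]; apply: val_inj;
    rewrite /= ?modn_mod // -[(Y %% N).+1]addn1 modnDml addn1.
rewrite -has_edge_seg ?ltn_pmod //; last lia.
rewrite modn_ltn2 in Ym *; last lia.
case: ifP Ym => YN Ym; [apply/negP/no_edge_after | apply/negP/no_edge_before]; lia.
Qed.

(* Vertices are shifted by [N] (chord sums by [2 N]) so that all arcs of the
   three-phase path stay in [nat]. *)
Lemma inner_chords_sum_lt i k j' l' : alpha < i -> i < k < b ->
  b < j' < N + alpha -> b < l' < N + alpha ->
  seg i j' \in B -> seg k l' \in B -> k + l' < i + j'.
Proof.
move=> ai ikb jr lr ijB klB; rewrite ltnNge; apply/negP => sums_le.
have zigzag_bounds := zigzag_sum_bounds N.
set u2 := zigzag_sum N (k + N + (l' + N)).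
have u2b := zigzag_bounds (k + N + (l' + N)).
have zig2 lo1 : lo1 <= k + N -> forall X Y, X < lo1 -> X < Y < X + N ->
    u2 <= X + Y <= u2.+1 -> seg X Y \notin B.
  move=> lo1k X Y Xlo XY XYu; apply: (zigzag_seg_notin (a := k + N) (c := l' + N)); rewrite ?segD //; try lia.
    by apply: (vertex_window_neq N_gt0 (L := k.+1)); lia.
  by apply: (vertex_window_neq N_gt0 (L := k + N)); lia.
have run X : b + N <= X < N + alpha + N -> seg X X.+1 \notin B.
  move=> Xr; rewrite (_ : X = X - N + N); last lia.
  by rewrite -addSn segD; apply: boundary_seg_notin; lia.
case: (leqP u2 (i + alpha + 3 * N)) => [R1|R2].
  set u1 := zigzag_sum N (i + N + (j' + N)).
  have := zigzag_bounds (i + N + (j' + N)); have := zigzag_sum_mono N (_ : i + N + (j' + N) <= k + N + (l' + N)).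
  move=> /(_ ltac:(lia)) u12 u1b.
  apply: (three_phase_path_meets B_meets (u1 := u1) (lo1 := i.+1 + N) (u2 := u2)); try lia.
  - move=> X Y Xlo XY XYu; apply: (zigzag_seg_notin (a := i + N) (c := j' + N)); rewrite ?segD //; try lia;
      by apply: (vertex_window_neq N_gt0 (L := i + N)); lia.
  - by move=> X Xr; apply: run; lia.
  - by apply: zig2; lia.
have aB : seg (alpha.+1 + N) (alpha + N + N) \in B.
  by rewrite segD segDr segC -has_edge_seg //; lia.
set u1 := zigzag_sum N (alpha.+1 + N + (alpha + N + N)).
have u1b := zigzag_bounds (alpha.+1 + N + (alpha + N + N)).
apply: (three_phase_path_meets B_meets (u1 := u1) (lo1 := k + N) (u2 := u2)); try lia.
- move=> X Y Xlo XY XYu; apply: (zigzag_seg_notin (a := alpha.+1 + N) (c := alpha + N + N)) => //;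
    try lia; by apply: (vertex_window_neq N_gt0 (L := alpha.+1 + N)); lia.
- by move=> X Xr; apply: run; lia.
- by apply: zig2; lia.
Qed.

End InnerChords.

Lemma unwrap_outside N (N_gt0 : 0 < N) alpha b (j : 'I_N) : b < N -> ~~ (alpha <= j <= b) ->
  exists2 j', b < j' < N + alpha & vertex N_gt0 j' = j.
Proof.
move=> bN; have := ltn_ord j; case: (leqP j b) => jb jN; rewrite ?jb ?andbT -?ltnNge => jout.
  by exists (j + N); [lia | rewrite vertexD vertex_ord].
by exists (nat_of_ord j); [lia | apply: vertex_ord].
Qed.

Lemma clockwise_order_of_sums N alpha b i k j' l' : alpha < i -> i < k < b -> k < N ->
  b < j' < N + alpha -> b < l' < N + alpha -> k + l' < i + j' ->
  [/\ 0 < cw_offset N i k < cw_offset N i (l' %% N),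
      cw_offset N i (l' %% N) < cw_offset N i (j' %% N)
    & k - i < vdist N (l' %% N) (j' %% N)].
Proof.
move=> ai ikb kN jr lr sums.
have cw y : i <= y < i + N -> cw_offset N i (y %% N) = y - i.
  by move=> iy; rewrite -{1}(@modn_small i N) ?cw_offset_mod //; lia.
by rewrite -[in cw_offset N i k](modn_small kN) !cw ?vdist_mod; try split; lia.
Qed.

Theorem proposition5 (m : nat) (B : {set {set 'I_(2 * m).-1}})
  (alpha delta : nat) (i j k l : 'I_(2 * m).-1) :
  (2 <= m)%N ->
  is_blocker B ->
  #|B| = m ->
  (* one edge of B per direction of the boundary edges [t,t+1], t < m *)
  (forall t, (t < m)%N ->
     exists e, [/\ e \in B, direction e = (2 * t + 1) %% (2 * m).-1 &
       forall f, f \in B -> direction f = (2 * t + 1) %% (2 * m).-1 -> f = e]) ->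
  (* [alpha, alpha+1] is the first edge of <0,1,...,m> in B *)
  (alpha < m)%N -> has_edge B alpha alpha.+1 ->
  (forall t, (t < alpha)%N -> ~~ has_edge B t t.+1) ->
  (* [m-delta-1, m-delta] is the last edge of <0,1,...,m> in B *)
  (delta < m)%N -> has_edge B (m - delta).-1 (m - delta) ->
  (forall t, (m - delta <= t < m)%N -> ~~ has_edge B t t.+1) ->
  [set i; j] \in B -> [set k; l] \in B ->
  (alpha < i < k)%N -> (k < m - delta)%N ->
  ~~ (alpha <= j <= m - delta)%N -> ~~ (alpha <= l <= m - delta)%N ->
  (* (1) i, k, l, j appear in this (clockwise) order on the boundary *)
  (0 < cw_offset (2 * m).-1 i k < cw_offset (2 * m).-1 i l)%N /\
  (cw_offset (2 * m).-1 i l < cw_offset (2 * m).-1 i j)%N /\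
  (* (2) *)
  (k - i < vdist (2 * m).-1 l j)%N.
Proof.
move=> m_ge2 [_ [B_meets _]] cardB dirs _ alpha_edge before _ _ after ijB klB
  /andP[ai ik] kb jout lout.
have N_def : ((2 * m).-1).+1 = 2 * m by lia.
have N_gt0 : 0 < (2 * m).-1 by lia.
have B_dirs := blocker_dirs N_def cardB dirs.
have B_odd e : e \in B -> odd_dir (2 * m).-1 (direction e).
  by case/B_dirs=> t tm ->; rewrite odd_dir_mod (odd_dir_boundary _ N_def) modn_small //; lia.
have B_uniq e f : e \in B -> f \in B -> direction e = direction f -> e = f.
  move=> eB fB ef; have [t tm et] := B_dirs e eB; have [g [_ _ g_uniq]] := dirs t tm.
  by rewrite (g_uniq e eB et) (g_uniq f fB) -?ef.
have bN : m - delta < (2 * m).-1 by lia.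
have [j' jr jE] := unwrap_outside N_gt0 bN jout.
have [l' lr lE] := unwrap_outside N_gt0 bN lout.
have ijB' : seg N_gt0 i j' \in B by rewrite /seg vertex_ord jE.
have klB' : seg N_gt0 k l' \in B by rewrite /seg vertex_ord lE.
have sums : k + l' < i + j'.
  by apply: (inner_chords_sum_lt N_def m_ge2 B_meets B_odd B_uniq _ _ alpha_edge before after
    ai _ jr lr ijB' klB'); lia.
have ikb : i < k < m - delta by rewrite ik.
have [cw_k cw_lj dist_lj] := clockwise_order_of_sums ai ikb (ltn_ord k) jr lr sums.
by rewrite -jE -lE; split; [|split].
Qed.
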